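(* For every set of formulas $\Gamma$ and every formula $\phi$: if $\Gamma\vdash\phi$ then $\Gamma\vDash\phi$. That is, the logic $\vdash$ is sound with respect to the class of continuous t-norms.
   Context: Fix a countable predicate language $\mathcal L$ consisting of variables, constant symbols and predicate symbols (so terms are just variables and constants), with connectives $\to$, $\&$, the propositional constant $0$ and quantifiers $\forall,\exists$. Abbreviations: $\phi\wedge\psi$ is $\phi\&(\phi\to\psi)$; $\phi\vee\psi$ is $((\phi\to\psi)\to\psi)\wedge((\psi\to\phi)\to\phi)$; $\neg\phi$ is $\phi\to 0$; $1$ is $0\to 0$; $\beta^n$ is $\beta\&\cdots\&\beta$ ($n$ factors). $\phi(x/t)$ denotes the result of substituting the term $t$ for the free occurrences of $x$ in $\phi$. A sentence is a formula with no free variables; a theory is any set of formulas. Hájek's basic predicate logic BL$\forall$ has the axiom schemata (A1) $(\phi\to\psi)\to((\psi\to\chi)\to(\phi\to\chi))$; (A2) $(\phi\&\psi)\to\phi$; (A3) $(\phi\&\psi)\to(\psi\&\phi)$; (A4) $(\phi\&(\phi\to\psi))\to(\psi\&(\psi\to\phi))$; (A5) $(\phi\to(\psi\to\chi))\to((\phi\&\psi)\to\chi)$; (A6) $((\phi\&\psi)\to\chi)\to(\phi\to(\psi\to\chi))$; (A7) $((\phi\to\psi)\to\chi)\to(((\psi\to\phi)\to\chi)\to\chi)$; (A8) $0\to\phi$; ($\forall$1) $\forall x\phi\to\phi(x/t)$ and ($\exists$1) $\phi(x/t)\to\exists x\phi$, for $t$ substitutable for $x$ in $\phi$; ($\forall$2)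 $\forall x(\phi\to\psi)\to(\phi\to\forall x\psi)$, ($\exists$2) $\forall x(\psi\to\phi)\to(\exists x\psi\to\phi)$ and (Lin) $\forall x(\psi\vee\phi)\to((\forall x\psi)\vee\phi)$, each with $x$ not free in $\phi$; its rules are modus ponens (from $\phi$ and $\phi\to\psi$ infer $\psi$) and generalization (from $\phi$ infer $\forall x\phi$). The logic $\vdash$ extends BL$\forall$ by the axiom schema (RC) $\forall x(\chi\&\chi)\to((\forall x\chi)\&(\forall x\chi))$ for every formula $\chi$, and the infinitary rule (Inf): from all of $\phi\vee(\alpha\to\beta^n)$, $n\in\mathbb N$, infer $\phi\vee(\alpha\to(\alpha\&\beta))$, where $\phi,\alpha,\beta$ are sentences. A proof from $\Gamma$ is a sequence $(\phi_i)_{i\le\xi}$ indexed by the ordinals up to some ordinal $\xi$ such that each $\phi_i$ is an axiom of BL$\forall$, an instance of (RC), a member of $\Gamma$, or is obtained from formulas in $\{\phi_j: j<i\}$ by modus ponens, generalization, or (Inf). $\Gamma\vdash\phi$ means there is a proof from $\Gamma$ whose last member is $\phi$. Semantics: a continuous t-norm is a continuous binary operation $\cdot$ on $[0,1]$ that is commutative, associative, monotone in each argument and has $1$ as unit; it is regarded as the algebra $([0,1],\cdot,\to,\min,\max,0,1)$ where $\to$ is its residuum ($x\cdot y\le z$ iff $x\le y\to z$). For such a $\mathbf B$, a $\mathbf B$-structure $\mathbf M$ consists of a nonempty set $M$, an element $c^{\mathbf M}\in M$ for each constant $c$, and a function $P^{\mathbf M}:M^n\to[0,1]$ for each $n$-ary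 predicate $P$. For a valuation $v$ (a map from variables to $M$), $\|\phi\|^{\mathbf M,v}$ is defined inductively: $\|P(t_1,\dots,t_n)\|^{\mathbf M,v}=P^{\mathbf M}(t_1^{\mathbf M,v},\dots,t_n^{\mathbf M,v})$ (with $c^{\mathbf M,v}=c^{\mathbf M}$, $x^{\mathbf M,v}=v(x)$), $\|0\|=0$, $\&$ and $\to$ are interpreted by $\cdot$ and its residuum, $\|\forall x\psi\|^{\mathbf M,v}=\inf\{\|\psi\|^{\mathbf M,w}:w\equiv_x v\}$ and $\|\exists x\psi\|^{\mathbf M,v}=\sup\{\|\psi\|^{\mathbf M,w}:w\equiv_x v\}$, where $w\equiv_x v$ means $w$ agrees with $v$ except possibly at $x$. $\mathbf M$ is a model of $\phi$ if $\|\phi\|^{\mathbf M,v}=1$ for every valuation $v$, and a model of a set $\Gamma$ if it is a model of each member. $\Gamma\vDash\phi$ means: for every continuous t-norm $\mathbf B$ and every $\mathbf B$-structure $\mathbf M$, if $\mathbf M$ is a model of $\Gamma$ then $\mathbf M$ is a model of $\phi$. *)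

From Stdlib Require Import Reals List.
From Stdlib Require Vector.
From Coquelicot Require Import Coquelicot.
Open Scope R_scope.

Record language := {
  Const : Type;
  Pred : Type;
  arity : Pred -> nat;
  Const_countable : exists f : Const -> nat, forall a b, f a = f b -> a = b;
  Pred_countable : exists f : Pred -> nat, forall a b, f a = f b -> a = b
}.

Section Syntax.
Variable L : language.

Inductive term : Type :=
| Var : nat -> term
| Cst : Const L -> term.

Inductive form : Type :=
| Atom : forall p : Pred L, Vector.t term (arity L p) -> form
| Imp : form -> form -> form
| Conj : form -> form -> form          (* strong conjunction & *)
| Zero : form
| All : nat -> form -> form
| Ex : nat -> form -> form.

Definition Wedge (f g : form) : form := Conj f (Imp f g).
Definition Vee (f g : form) : form :=
  Wedge (Imp (Imp f g) g) (Imp (Imp g f) f).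
Definition Neg (f : form) : form := Imp f Zero.
Definition One : form := Imp Zero Zero.
(* bpow b n = b & ... & b with n+1 factors, i.e. b^(n+1) *)
Fixpoint bpow (b : form) (n : nat) : form :=
  match n with
  | O => b
  | S k => Conj b (bpow b k)
  end.

Definition term_has_var (x : nat) (t : term) : bool :=
  match t with Var y => Nat.eqb x y | Cst _ => false end.

Fixpoint free (x : nat) (f : form) : bool :=
  match f with
  | Atom p ts => Vector.fold_right (fun t b => orb (term_has_var x t) b) ts false
  | Imp g h | Conj g h => orb (free x g) (free x h)
  | Zero => false
  | All y g | Ex y g => if Nat.eqb x y then false else free x g
  end.

Definition sentence (f : form) : Prop := forall x, free x f = false.

Definition tsubst (x : nat) (t : term) (s : term) : term :=
  match s with
  | Var y => if Nat.eqb x y then t else Var y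
  | Cst c => Cst c
  end.

(* f(x/t): replace the free occurrences of x in f by t (no renaming) *)
Fixpoint subst (x : nat) (t : term) (f : form) : form :=
  match f with
  | Atom p ts => Atom p (Vector.map (tsubst x t) ts)
  | Imp g h => Imp (subst x t g) (subst x t h)
  | Conj g h => Conj (subst x t g) (subst x t h)
  | Zero => Zero
  | All y g => if Nat.eqb x y then All y g else All y (subst x t g)
  | Ex y g => if Nat.eqb x y then Ex y g else Ex y (subst x t g)
  end.

Fixpoint substitutable (t : term) (x : nat) (f : form) : Prop :=
  match f with
  | Atom _ _ | Zero => True
  | Imp g h | Conj g h => substitutable t x g /\ substitutable t x h
  | All y g | Ex y g =>
      free x f = false \/ (term_has_var y t = false /\ substitutable t x g)
  end.

Inductive BLaxiom : form -> Prop :=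
| A1 f g h : BLaxiom (Imp (Imp f g) (Imp (Imp g h) (Imp f h)))
| A2 f g : BLaxiom (Imp (Conj f g) f)
| A3 f g : BLaxiom (Imp (Conj f g) (Conj g f))
| A4 f g : BLaxiom (Imp (Conj f (Imp f g)) (Conj g (Imp g f)))
| A5 f g h : BLaxiom (Imp (Imp f (Imp g h)) (Imp (Conj f g) h))
| A6 f g h : BLaxiom (Imp (Imp (Conj f g) h) (Imp f (Imp g h)))
| A7 f g h : BLaxiom (Imp (Imp (Imp f g) h) (Imp (Imp (Imp g f) h) h))
| A8 f : BLaxiom (Imp Zero f)
| All1 x f t : substitutable t x f -> BLaxiom (Imp (All x f) (subst x t f))
| Ex1 x f t : substitutable t x f -> BLaxiom (Imp (subst x t f) (Ex x f))
| All2 x f g : free x f = false ->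
    BLaxiom (Imp (All x (Imp f g)) (Imp f (All x g)))
| Ex2 x f g : free x f = false ->
    BLaxiom (Imp (All x (Imp g f)) (Imp (Ex x g) f))
| Lin x f g : free x f = false ->
    BLaxiom (Imp (All x (Vee g f)) (Vee (All x g) f)).

Inductive RCaxiom : form -> Prop :=
| RC x c : RCaxiom (Imp (All x (Conj c c)) (Conj (All x c) (All x c))).

(* A proof from Gamma: a sequence indexed by the ordinals up to some xi,
   rendered as a well-ordered index type I with a greatest element. *)
Record proof_from (Gamma : form -> Prop) (phi : form) := {
  pidx : Type;
  plt : pidx -> pidx -> Prop;
  plt_irrefl : forall i, ~ plt i i;
  plt_trans : forall i j k, plt i j -> plt j k -> plt i k;
  plt_total : forall i j, plt i j \/ i = j \/ plt j i;
  plt_wf : well_founded plt;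
  plast : pidx;
  plast_max : forall i, i = plast \/ plt i plast;
  pform : pidx -> form;
  pform_last : pform plast = phi;
  pjust : forall i,
    BLaxiom (pform i) \/ RCaxiom (pform i) \/ Gamma (pform i) \/
    (exists j k, plt j i /\ plt k i /\ pform k = Imp (pform j) (pform i)) \/
    (exists j x, plt j i /\ pform i = All x (pform j)) \/
    (exists f a b, sentence f /\ sentence a /\ sentence b /\
       pform i = Vee f (Imp a (Conj a b)) /\
       forall n, exists j, plt j i /\ pform j = Vee f (Imp a (bpow b n)))
}.

Definition provable (Gamma : form -> Prop) (phi : form) : Prop :=
  exists p : proof_from Gamma phi, True.

End Syntax.

Definition in01 (x : R) : Prop := 0 <= x <= 1.

Record ctnorm := {
  tn : R -> R -> R;
  res : R -> R -> R;
  tn_in01 : forall x y, in01 x -> in01 y -> in01 (tn x y);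
  tn_comm : forall x y, in01 x -> in01 y -> tn x y = tn y x;
  tn_assoc : forall x y z, in01 x -> in01 y -> in01 z ->
      tn x (tn y z) = tn (tn x y) z;
  tn_mono : forall x y z, in01 x -> in01 y -> in01 z ->
      x <= y -> tn x z <= tn y z;
  tn_mono_r : forall x y z, in01 x -> in01 y -> in01 z ->
      x <= y -> tn z x <= tn z y;
  tn_unit : forall x, in01 x -> tn x 1 = x;
  tn_cont : forall x y, in01 x -> in01 y -> forall eps, 0 < eps ->
      exists delta, 0 < delta /\ forall x' y', in01 x' -> in01 y' ->
        Rabs (x - x') < delta -> Rabs (y - y') < delta ->
        Rabs (tn x y - tn x' y') < eps;
  res_in01 : forall x y, in01 x -> in01 y -> in01 (res x y);
  residuation : forall x y z, in01 x -> in01 y -> in01 z ->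
      (tn x y <= z <-> x <= res y z)
}.

Record structure (L : language) := {
  dom : Type;
  dom_nonempty : inhabited dom;
  cint : Const L -> dom;
  pint : forall p : Pred L, Vector.t dom (arity L p) -> R;
  pint_in01 : forall p args, in01 (pint p args)
}.

Section Semantics.
Variables (L : language) (B : ctnorm) (M : structure L).

Definition upd (v : nat -> dom L M) (x : nat) (m : dom L M) : nat -> dom L M :=
  fun y => if Nat.eqb y x then m else v y.

Definition teval (v : nat -> dom L M) (t : term L) : dom L M :=
  match t with Var y => v y | Cst c => cint L M c end.

Fixpoint eval (f : form L) (v : nat -> dom L M) : R :=
  match f with
  | Atom p ts => pint L M p (Vector.map (teval v) ts)
  | Imp g h => res B (eval g v) (eval h v)
  | Conj g h => tn B (eval g v) (eval h v)
  | Zero => 0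
  | All x g => real (Glb_Rbar (fun r => exists m, r = eval g (upd v x m)))
  | Ex x g => real (Lub_Rbar (fun r => exists m, r = eval g (upd v x m)))
  end.

Definition is_model (f : form L) : Prop := forall v, eval f v = 1.

End Semantics.

Definition entails (L : language) (Gamma : form L -> Prop) (phi : form L) : Prop :=
  forall (B : ctnorm) (M : structure L),
    (forall psi, Gamma psi -> is_model L B M psi) -> is_model L B M phi.

(* Every axiom evaluates to 1 and every rule preserves validity, so validity
   propagates along the well-founded index set of a proof.  Two features of
   continuous t-norms carry the non-classical part.  Continuity and the
   intermediate value theorem make them divisible ([x <= y] gives [x = y * z]),
   hence [x * (x -> y) = min x y], the abbreviation [\/] is [max], and the BL
   axioms hold.  Continuity also lets [*] commute with infima: this gives (RC),
   and makes the infimum [b0] of the powers [b^n] idempotent, so that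
   [a <= b^n] for all [n] yields [a = b0 * z], [a * b0 = a] and [a <= a * b],
   which is (Inf). *)
From Pilot Require Import Defs.
From Stdlib Require Import Reals Lra Classical FunctionalExtensionality.
From Coquelicot Require Import Coquelicot.
Open Scope R_scope.

Lemma in01_0 : in01 0. Proof. unfold in01; lra. Qed.
Lemma in01_1 : in01 1. Proof. unfold in01; lra. Qed.

#[local] Hint Resolve in01_0 in01_1 tn_in01 res_in01 : in01.

Definition clamp01 (z : R) : R := Rmax 0 (Rmin 1 z).

Lemma clamp01_in01 z : in01 (clamp01 z).
Proof. unfold clamp01, in01, Rmax, Rmin; repeat destruct Rle_dec; lra. Qed.

Lemma clamp01_id z : in01 z -> clamp01 z = z.
Proof. unfold clamp01, in01, Rmax, Rmin; intros; repeat destruct Rle_dec; lra. Qed.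

Lemma clamp01_lipschitz z z' : Rabs (clamp01 z - clamp01 z') <= Rabs (z - z').
Proof.
  unfold clamp01, Rmax, Rmin; repeat destruct Rle_dec;
    unfold Rabs; repeat destruct Rcase_abs; lra.
Qed.

Lemma Rmax_eq1 x y : x <= 1 -> y <= 1 -> Rmax x y = 1 -> x = 1 \/ y = 1.
Proof. unfold Rmax; destruct Rle_dec; lra. Qed.

Definition glbf {D : Type} (h : D -> R) : R :=
  real (Glb_Rbar (fun r => exists m, r = h m)).
Definition lubf {D : Type} (h : D -> R) : R :=
  real (Lub_Rbar (fun r => exists m, r = h m)).

Section Bounds.
Context {D : Type} (h : D -> R).
Hypotheses (HD : inhabited D) (Hh : forall d, in01 (h d)).

Lemma glbf_spec :
  (forall m, glbf h <= h m) /\ (forall b, (forall m, b <= h m) -> b <= glbf h).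
Proof.
  destruct HD as [d0]; unfold glbf.
  destruct (Glb_Rbar_correct (fun r => exists m, r = h m)) as [Hlb Hgr].
  destruct (Glb_Rbar _) as [g| |]; simpl in *.
  - split; [intro m; apply (Hlb (h m)); eauto|].
    intros b Hb; apply (Hgr (Finite b)); intros x [m ->]; apply Hb.
  - destruct (Hlb (h d0) (ex_intro _ d0 eq_refl)).
  - destruct (Hgr (Finite 0)); intros x [m ->]; apply Hh.
Qed.

Lemma lubf_spec :
  (forall m, h m <= lubf h) /\ (forall b, (forall m, h m <= b) -> lubf h <= b).
Proof.
  destruct HD as [d0]; unfold lubf.
  destruct (Lub_Rbar_correct (fun r => exists m, r = h m)) as [Hub Hle].
  destruct (Lub_Rbar _) as [g| |]; simpl in *.
  - split; [intro m; apply (Hub (h m)); eauto|].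
    intros b Hb; apply (Hle (Finite b)); intros x [m ->]; apply Hb.
  - destruct (Hle (Finite 1)); intros x [m ->]; apply Hh.
  - destruct (Hub (h d0) (ex_intro _ d0 eq_refl)).
Qed.

Lemma glbf_le m : glbf h <= h m.
Proof. apply glbf_spec. Qed.

Lemma glbf_greatest b : (forall m, b <= h m) -> b <= glbf h.
Proof. apply glbf_spec. Qed.

Lemma lubf_ge m : h m <= lubf h.
Proof. apply lubf_spec. Qed.

Lemma lubf_least b : (forall m, h m <= b) -> lubf h <= b.
Proof. apply lubf_spec. Qed.

Lemma glbf_in01 : in01 (glbf h).
Proof.
  destruct HD as [d0]; split.
  - apply glbf_greatest; intro m; apply Hh.
  - apply (Rle_trans _ (h d0)); [apply glbf_le | apply Hh].
Qed.

Lemma lubf_in01 : in01 (lubf h).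
Proof.
  destruct HD as [d0]; split.
  - apply (Rle_trans _ (h d0)); [apply Hh | apply lubf_ge].
  - apply lubf_least; intro m; apply Hh.
Qed.

Lemma glbf_approx eps : 0 < eps -> exists m, h m < glbf h + eps.
Proof.
  intros Heps; apply not_all_not_ex; intro Hn.
  assert (glbf h + eps <= glbf h) by (apply glbf_greatest; intro m; apply Rnot_lt_le, Hn).
  lra.
Qed.

End Bounds.

Section TNorm.
Variable B : ctnorm.
Local Notation t := (tn B).
Local Notation r := (res B).

Lemma le_res_of_tn_le x y z : in01 x -> in01 y -> in01 z -> t x y <= z -> x <= r y z.
Proof. intros; apply residuation; auto. Qed.

Lemma tn_le_of_le_res x y z : in01 x -> in01 y -> in01 z -> x <= r y z -> t x y <= z.
Proof. intros; apply residuation; auto. Qed.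

Lemma tn1l x : in01 x -> t 1 x = x.
Proof. intros; rewrite tn_comm by auto with in01; apply tn_unit; auto. Qed.

Lemma tn_le_l x y : in01 x -> in01 y -> t x y <= x.
Proof.
  intros Hx Hy; rewrite <- (tn_unit B x) at 2 by auto.
  apply tn_mono_r; auto with in01; apply Hy.
Qed.

Lemma tn_le_r x y : in01 x -> in01 y -> t x y <= y.
Proof. intros; rewrite tn_comm by auto; apply tn_le_l; auto. Qed.

Lemma tn0r x : in01 x -> t x 0 = 0.
Proof. intros; apply Rle_antisym; [apply tn_le_r | apply (tn_in01 B)]; auto with in01. Qed.

Lemma res_le1 x y : in01 x -> in01 y -> r x y <= 1.
Proof. intros; apply (res_in01 B); auto. Qed.

Lemma res_eq1 x y : in01 x -> in01 y -> x <= y -> r x y = 1.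
Proof.
  intros; apply Rle_antisym; [apply res_le1; auto|].
  apply le_res_of_tn_le; auto with in01; rewrite tn1l; auto.
Qed.

Lemma res_eq1_le x y : in01 x -> in01 y -> r x y = 1 -> x <= y.
Proof. intros Hx Hy E; rewrite <- (tn1l x) by auto; apply tn_le_of_le_res; auto with in01; lra. Qed.

Lemma res1l y : in01 y -> r 1 y = y.
Proof.
  intros; apply Rle_antisym.
  - rewrite <- (tn_unit B (r 1 y)) by auto with in01.
    apply tn_le_of_le_res; auto with in01; lra.
  - apply le_res_of_tn_le; auto with in01; rewrite tn_unit; auto; lra.
Qed.

Lemma tn_res_le x y : in01 x -> in01 y -> t x (r x y) <= y.
Proof. intros; rewrite tn_comm by auto with in01; apply tn_le_of_le_res; auto with in01; lra. Qed.

Lemma le_res x y : in01 x -> in01 y -> y <= r x y.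
Proof. intros; apply le_res_of_tn_le; auto with in01; apply tn_le_l; auto. Qed.

Lemma continuity_tn_clamp01 y : in01 y -> continuity (fun z => t y (clamp01 z)).
Proof.
  intros Hy z0 eps Heps.
  destruct (tn_cont B y (clamp01 z0) Hy (clamp01_in01 z0) eps Heps) as [d [Hd Hcont]].
  exists d; split; auto; intros z [_ Hz]; simpl in *; unfold R_dist in *.
  rewrite Rabs_minus_sym; apply Hcont; auto using clamp01_in01.
  - rewrite Rminus_diag, Rabs_R0; auto.
  - eapply Rle_lt_trans; [apply clamp01_lipschitz|]; rewrite Rabs_minus_sym; auto.
Qed.

Lemma tn_divisible x y : in01 x -> in01 y -> x <= y -> exists z, in01 z /\ t y z = x.
Proof.
  intros Hx Hy Hxy.
  assert (H0 : t y (clamp01 0) = 0) by (rewrite clamp01_id, tn0r; auto with in01).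
  assert (H1 : t y (clamp01 1) = y) by (rewrite clamp01_id, tn_unit; auto with in01).
  destruct (IVT_gen _ 0 1 x (continuity_tn_clamp01 y Hy)) as [z [_ Hz]].
  { rewrite H0, H1; unfold Rmin, Rmax, in01 in *; repeat destruct Rle_dec; lra. }
  exists (clamp01 z); split; [apply clamp01_in01 | exact Hz].
Qed.

Lemma tn_res_min x y : in01 x -> in01 y -> t x (r x y) = Rmin x y.
Proof.
  intros Hx Hy; unfold Rmin; destruct Rle_dec as [Hxy|Hxy].
  - rewrite res_eq1, tn_unit; auto.
  - destruct (tn_divisible y x) as [z [Hz <-]]; auto; [lra|].
    apply Rle_antisym; [apply tn_res_le; auto with in01|].
    apply tn_mono_r; auto with in01.
    apply le_res_of_tn_le; auto with in01; rewrite tn_comm; auto with in01; lra.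
Qed.

Lemma le_res_res x y : in01 x -> in01 y -> x <= r (r x y) y.
Proof. intros; apply le_res_of_tn_le; auto with in01; apply tn_res_le; auto. Qed.

Lemma res_res_min_max x y : in01 x -> in01 y ->
  Rmin (r (r x y) y) (r (r y x) x) = Rmax x y.
Proof.
  intros Hx Hy.
  pose proof (le_res_res x y Hx Hy); pose proof (le_res_res y x Hy Hx).
  pose proof (le_res (r x y) y); pose proof (le_res (r y x) x).
  unfold Rmax; destruct Rle_dec as [Hxy|Hxy].
  - rewrite (res_eq1 x y), res1l by auto; apply Rmin_left; lra.
  - rewrite (res_eq1 y x), res1l by (auto; lra); apply Rmin_right.
    assert (y <= r (r x y) y) by auto with in01; lra.
Qed.

Lemma res_comp a b c : in01 a -> in01 b -> in01 c -> t (r a b) (r b c) <= r a c.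
Proof.
  intros; apply le_res_of_tn_le; auto with in01.
  rewrite tn_comm, tn_assoc by auto with in01.
  apply (Rle_trans _ (t b (r b c))); [apply tn_mono|]; auto using tn_res_le with in01.
Qed.

Lemma tn_res_comm a b : in01 a -> in01 b -> t a (r a b) = t b (r b a).
Proof. intros; rewrite !tn_res_min by auto; apply Rmin_comm. Qed.

Lemma res_curry a b c : in01 a -> in01 b -> in01 c -> r a (r b c) = r (t a b) c.
Proof.
  intros; apply Rle_antisym.
  - apply le_res_of_tn_le; auto with in01; rewrite tn_assoc by auto with in01.
    apply tn_le_of_le_res; auto with in01; rewrite tn_comm by auto with in01.
    apply tn_res_le; auto with in01.
  - apply le_res_of_tn_le, le_res_of_tn_le; auto with in01.
    rewrite <- tn_assoc, tn_comm by auto with in01; apply tn_res_le; auto with in01.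
Qed.

Lemma res_prelinear a b c : in01 a -> in01 b -> in01 c ->
  r (r a b) c <= r (r (r b a) c) c.
Proof.
  intros; destruct (Rle_dec a b).
  - rewrite (res_eq1 a b), res1l by auto; apply le_res; auto with in01.
  - rewrite (res_eq1 b a), res1l, (res_eq1 c c) by (auto; lra); apply res_le1; auto with in01.
Qed.

Lemma glbf_tn_diag {D : Type} (h : D -> R) : inhabited D -> (forall d, in01 (h d)) ->
  glbf (fun m => t (h m) (h m)) <= t (glbf h) (glbf h).
Proof.
  intros HD Hh; set (g := glbf h).
  assert (Hg : in01 g) by now apply glbf_in01.
  apply Rnot_lt_le; intro Hlt.
  destruct (tn_cont B g g Hg Hg (glbf (fun m => t (h m) (h m)) - t g g) ltac:(lra))
    as [d [Hd Hcont]].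
  destruct (glbf_approx h HD Hh d Hd) as [m Hm]; fold g in Hm.
  assert (Hdist : Rabs (g - h m) < d).
  { assert (g <= h m) by (apply glbf_le; auto); rewrite Rabs_left1; lra. }
  specialize (Hcont _ _ (Hh m) (Hh m) Hdist Hdist).
  pose proof (glbf_le (fun m => t (h m) (h m)) HD (fun d => tn_in01 B _ _ (Hh d) (Hh d)) m).
  pose proof (Rle_abs (t (h m) (h m) - t g g)); rewrite Rabs_minus_sym in Hcont; lra.
Qed.

(* [tpow b n] is [b^(n+1)], matching [bpow]. *)
Fixpoint tpow (b : R) (n : nat) : R :=
  match n with
  | O => b
  | S k => t b (tpow b k)
  end.

Lemma tpow_in01 b n : in01 b -> in01 (tpow b n).
Proof. intros; induction n; simpl; auto with in01. Qed.

Lemma tpow_add b n m : in01 b -> tpow b (S (n + m)) = t (tpow b n) (tpow b m).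
Proof.
  intros; induction n; simpl in *; [reflexivity|].
  rewrite IHn, tn_assoc; auto using tpow_in01.
Qed.

(* [b^(2n+2) = b^(n+1) * b^(n+1)] makes the infimum of the powers idempotent. *)
Lemma glbf_tpow_idem b : in01 b -> glbf (tpow b) <= t (glbf (tpow b)) (glbf (tpow b)).
Proof.
  intros Hb; assert (HD : inhabited nat) by exact (inhabits O).
  apply (Rle_trans _ (glbf (fun n => t (tpow b n) (tpow b n)))).
  - apply glbf_greatest; auto with in01; [intro; apply tn_in01; apply tpow_in01; auto|].
    intro n; rewrite <- tpow_add by auto; apply glbf_le; auto using tpow_in01.
  - apply glbf_tn_diag; auto using tpow_in01.
Qed.

Lemma le_tn_of_le_tpow a b : in01 a -> in01 b ->
  (forall n, a <= tpow b n) -> a <= t a b.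
Proof.
  intros Ha Hb Hab; set (b0 := glbf (tpow b)).
  assert (HD : inhabited nat) by exact (inhabits O).
  assert (Hb0 : in01 b0) by (apply glbf_in01; auto using tpow_in01).
  assert (Hidem : t b0 b0 = b0).
  { apply Rle_antisym; [apply tn_le_l | apply glbf_tpow_idem]; auto. }
  destruct (tn_divisible a b0) as [z [Hz Hza]]; auto.
  { apply glbf_greatest; auto using tpow_in01. }
  assert (Habs : t a b0 = a).
  { rewrite <- Hza, tn_comm, tn_assoc, Hidem; auto with in01. }
  rewrite <- Habs at 1; apply tn_mono_r; auto.
  apply (glbf_le (tpow b) HD (fun n => tpow_in01 b n Hb) O).
Qed.

Lemma inf_rule_valid f a b : in01 f -> in01 a -> in01 b ->
  (forall n, Rmax f (r a (tpow b n)) = 1) -> Rmax f (r a (t a b)) = 1.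
Proof.
  intros Hf Ha Hb Hn; destruct (Req_dec f 1) as [->|Hf1].
  - apply Rmax_left, res_le1; auto with in01.
  - rewrite (res_eq1 a), Rmax_right; auto with in01; [apply Hf|].
    apply le_tn_of_le_tpow; auto; intro n.
    destruct (Rmax_eq1 _ _ (proj2 Hf) (res_le1 a _ Ha (tpow_in01 b n Hb)) (Hn n));
      [contradiction|].
    apply res_eq1_le; auto using tpow_in01.
Qed.

End TNorm.

Section Semantics.
Variables (L : language) (B : ctnorm) (M : structure L).
Local Notation eval := (eval L B M).
Local Notation upd := (upd L M).
Local Notation teval := (teval L M).
Local Notation r := (res B).

Lemma eval_in01 f v : in01 (eval f v).
Proof.
  revert v; induction f; intro v; simpl; auto using pint_in01 with in01.
  - apply glbf_in01; auto using dom_nonempty.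
  - apply lubf_in01; auto using dom_nonempty.
Qed.

#[local] Hint Resolve eval_in01 : in01.

Lemma eval_Imp f g v : eval (Imp L f g) v = r (eval f v) (eval g v).
Proof. reflexivity. Qed.

Lemma eval_Vee f g v : eval (Vee L f g) v = Rmax (eval f v) (eval g v).
Proof. simpl; rewrite tn_res_min, res_res_min_max; auto with in01. Qed.

Lemma eval_bpow b n v : eval (bpow L b n) v = tpow B (eval b v) n.
Proof. induction n; simpl; congruence. Qed.

Lemma eval_All_le x g v m : eval (All L x g) v <= eval g (upd v x m).
Proof. apply (glbf_le (fun m => eval g (upd v x m))); auto using dom_nonempty with in01. Qed.

Lemma eval_All_greatest x g v b :
  (forall m, b <= eval g (upd v x m)) -> b <= eval (All L x g) v.
Proof. apply glbf_greatest; auto using dom_nonempty with in01. Qed.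

Lemma eval_Ex_ge x g v m : eval g (upd v x m) <= eval (Ex L x g) v.
Proof. apply (lubf_ge (fun m => eval g (upd v x m))); auto using dom_nonempty with in01. Qed.

Lemma eval_Ex_least x g v b :
  (forall m, eval g (upd v x m) <= b) -> eval (Ex L x g) v <= b.
Proof. apply lubf_least; auto using dom_nonempty with in01. Qed.

Lemma map_teval_ext n (ts : Vector.t (term L) n) v w :
  (forall z, Vector.fold_right (fun s b => orb (term_has_var L z s) b) ts false = true ->
     v z = w z) ->
  Vector.map (teval v) ts = Vector.map (teval w) ts.
Proof.
  induction ts as [|s n ts IH]; intros Hvw; simpl; [reflexivity|]; f_equal.
  - destruct s as [y|c]; simpl; [|reflexivity].
    apply Hvw; simpl; rewrite Nat.eqb_refl; reflexivity.
  - apply IH; intros z Hz; apply Hvw; simpl; rewrite Hz; apply Bool.orb_true_r.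
Qed.

Lemma eval_ext f v w : (forall z, free L z f = true -> v z = w z) -> eval f v = eval f w.
Proof.
  revert v w; induction f as [p ts|f IHf g IHg|f IHf g IHg| |n f IHf|n f IHf];
    intros v w Hvw; simpl in *.
  - f_equal; apply map_teval_ext, Hvw.
  - rewrite (IHf v w), (IHg v w); auto; intros z Hz; apply Hvw; rewrite Hz;
      auto using Bool.orb_true_r.
  - rewrite (IHf v w), (IHg v w); auto; intros z Hz; apply Hvw; rewrite Hz;
      auto using Bool.orb_true_r.
  - reflexivity.
  - change (glbf (fun m => eval f (upd v n m)) = glbf (fun m => eval f (upd w n m))).
    f_equal; extensionality m; apply IHf; intros z Hz; unfold Defs.upd.
    destruct (Nat.eqb z n) eqn:E; auto; apply Hvw; rewrite E; exact Hz.
  - change (lubf (fun m => eval f (upd v n m)) = lubf (fun m => eval f (upd w n m))).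
    f_equal; extensionality m; apply IHf; intros z Hz; unfold Defs.upd.
    destruct (Nat.eqb z n) eqn:E; auto; apply Hvw; rewrite E; exact Hz.
Qed.

Lemma eval_upd_notfree f x m v : free L x f = false -> eval f (upd v x m) = eval f v.
Proof.
  intros Hx; apply eval_ext; intros z Hz; unfold Defs.upd.
  destruct (Nat.eqb z x) eqn:E; [apply Nat.eqb_eq in E; subst; congruence | reflexivity].
Qed.

Lemma subst_notfree x s f : free L x f = false -> subst L x s f = f.
Proof.
  induction f as [p ts|f IHf g IHg|f IHf g IHg| |n f IHf|n f IHf]; simpl; intros Hx.
  - f_equal; induction ts as [|s' k ts IH]; simpl in *; [reflexivity|].
    apply Bool.orb_false_iff in Hx as [Hs' Hts]; f_equal; auto.
    destruct s' as [y|c]; simpl in *; [rewrite Hs'|]; reflexivity.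
  - apply Bool.orb_false_iff in Hx as [Hf Hg]; f_equal; auto.
  - apply Bool.orb_false_iff in Hx as [Hf Hg]; f_equal; auto.
  - reflexivity.
  - destruct (Nat.eqb x n); [|f_equal]; auto.
  - destruct (Nat.eqb x n); [|f_equal]; auto.
Qed.

Lemma teval_upd_notvar v n m s :
  term_has_var L n s = false -> teval (upd v n m) s = teval v s.
Proof.
  destruct s as [y|c]; simpl; [|reflexivity]; intros Hy.
  unfold Defs.upd; rewrite Nat.eqb_sym, Hy; reflexivity.
Qed.

Lemma upd_swap v x n a b : x <> n -> upd (upd v x a) n b = upd (upd v n b) x a.
Proof.
  intros Hxn; extensionality z; unfold Defs.upd.
  destruct (Nat.eqb z n) eqn:En, (Nat.eqb z x) eqn:Ex; auto.
  apply Nat.eqb_eq in En, Ex; congruence.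
Qed.

(* Under a binder [n] the substituted term must avoid [n], which is what
   lets the assignment to [x] commute with the assignment to [n]. *)
Lemma eval_subst_under_binder x s f v n m :
  x <> n -> term_has_var L n s = false ->
  (forall w, eval (subst L x s f) w = eval f (upd w x (teval w s))) ->
  eval (subst L x s f) (upd v n m) = eval f (upd (upd v x (teval v s)) n m).
Proof.
  intros Hxn Hn IHf; rewrite IHf, teval_upd_notvar, upd_swap by auto; reflexivity.
Qed.

Lemma eval_subst x s f v : substitutable L s x f ->
  eval (subst L x s f) v = eval f (upd v x (teval v s)).
Proof.
  revert v; induction f as [p ts|f IHf g IHg|f IHf g IHg| |n f IHf|n f IHf];
    intros v Hs.
  - simpl; f_equal; rewrite Vector.map_map; apply Vector.map_ext.
    intros [y|c]; simpl; unfold Defs.upd; [rewrite Nat.eqb_sym; destruct Nat.eqb|];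
      reflexivity.
  - destruct Hs; simpl; rewrite IHf, IHg; auto.
  - destruct Hs; simpl; rewrite IHf, IHg; auto.
  - reflexivity.
  - destruct Hs as [Hfree|[Hn Hs]].
    { rewrite subst_notfree, eval_upd_notfree by exact Hfree; reflexivity. }
    destruct (Nat.eqb x n) eqn:Exn.
    { rewrite subst_notfree, eval_upd_notfree by (simpl; rewrite Exn; reflexivity);
        reflexivity. }
    simpl subst; rewrite Exn; apply Nat.eqb_neq in Exn.
    change (glbf (fun m => eval (subst L x s f) (upd v n m))
          = glbf (fun m => eval f (upd (upd v x (teval v s)) n m))).
    f_equal; extensionality m; apply eval_subst_under_binder; auto.
  - destruct Hs as [Hfree|[Hn Hs]].
    { rewrite subst_notfree, eval_upd_notfree by exact Hfree; reflexivity. }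
    destruct (Nat.eqb x n) eqn:Exn.
    { rewrite subst_notfree, eval_upd_notfree by (simpl; rewrite Exn; reflexivity);
        reflexivity. }
    simpl subst; rewrite Exn; apply Nat.eqb_neq in Exn.
    change (lubf (fun m => eval (subst L x s f) (upd v n m))
          = lubf (fun m => eval f (upd (upd v x (teval v s)) n m))).
    f_equal; extensionality m; apply eval_subst_under_binder; auto.
Qed.

Lemma eval_All_Imp_le x f g v : free L x f = false ->
  eval (All L x (Imp L f g)) v <= r (eval f v) (eval (All L x g) v).
Proof.
  intros Hx; apply le_res_of_tn_le; auto with in01.
  apply eval_All_greatest; intro m; apply tn_le_of_le_res; auto with in01.
  rewrite <- (eval_upd_notfree f x m v Hx); apply (eval_All_le x (Imp L f g)).
Qed.

Lemma eval_All_Imp_Ex_le x f g v : free L x f = false ->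
  eval (All L x (Imp L g f)) v <= r (eval (Ex L x g) v) (eval f v).
Proof.
  intros Hx; apply le_res_of_tn_le; auto with in01.
  rewrite tn_comm by auto with in01; apply tn_le_of_le_res; auto with in01.
  apply eval_Ex_least; intro m; apply le_res_of_tn_le; auto with in01.
  rewrite tn_comm by auto with in01; apply tn_le_of_le_res; auto with in01.
  rewrite <- (eval_upd_notfree f x m v Hx); apply (eval_All_le x (Imp L g f)).
Qed.

Lemma eval_All_Vee_le x f g v : free L x f = false ->
  eval (All L x (Vee L g f)) v <= Rmax (eval (All L x g) v) (eval f v).
Proof.
  intros Hx; destruct (Rle_dec (eval (All L x (Vee L g f)) v) (eval f v)) as [Hle|Hgt].
  { apply (Rle_trans _ _ _ Hle), Rmax_r. }
  apply (Rle_trans _ (eval (All L x g) v)); [|apply Rmax_l].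
  apply eval_All_greatest; intro m.
  pose proof (eval_All_le x (Vee L g f) v m) as Hm.
  rewrite eval_Vee, (eval_upd_notfree f) in Hm by exact Hx.
  revert Hm; unfold Rmax; destruct Rle_dec; lra.
Qed.

Lemma valid_BLaxiom f : BLaxiom L f -> is_model L B M f.
Proof.
  intros Hax v; destruct Hax; rewrite eval_Imp;
    (apply res_eq1; [apply eval_in01 | apply eval_in01 |]).
  - apply le_res_of_tn_le, res_comp; auto with in01.
  - apply tn_le_l; auto with in01.
  - cbn; rewrite tn_comm by auto with in01; lra.
  - cbn; rewrite tn_res_comm by auto with in01; lra.
  - cbn; rewrite res_curry by auto with in01; lra.
  - cbn; rewrite res_curry by auto with in01; lra.
  - apply res_prelinear; auto with in01.
  - apply (proj1 (eval_in01 f v)).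
  - rewrite eval_subst by assumption; apply eval_All_le.
  - rewrite eval_subst by assumption; apply eval_Ex_ge.
  - apply eval_All_Imp_le; assumption.
  - apply eval_All_Imp_Ex_le; assumption.
  - rewrite eval_Vee; apply eval_All_Vee_le; assumption.
Qed.

Lemma valid_RCaxiom f : RCaxiom L f -> is_model L B M f.
Proof.
  intros [x c] v; rewrite eval_Imp; apply res_eq1; [apply eval_in01 | apply eval_in01 |].
  apply (glbf_tn_diag B (fun m => eval c (upd v x m))); auto using dom_nonempty with in01.
Qed.

Lemma valid_mp f g : is_model L B M (Imp L f g) -> is_model L B M f -> is_model L B M g.
Proof.
  intros Hfg Hf v; specialize (Hfg v); simpl in Hfg.
  rewrite Hf, res1l in Hfg by auto with in01; exact Hfg.
Qed.

Lemma valid_gen x f : is_model L B M f -> is_model L B M (All L x f).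
Proof.
  intros Hf v; apply Rle_antisym; [apply eval_in01|].
  apply eval_All_greatest; intro m; rewrite Hf; lra.
Qed.

Lemma valid_inf f a b :
  (forall n, is_model L B M (Vee L f (Imp L a (bpow L b n)))) ->
  is_model L B M (Vee L f (Imp L a (Conj L a b))).
Proof.
  intros Hn v; rewrite eval_Vee, eval_Imp.
  apply inf_rule_valid; auto with in01; intro n.
  specialize (Hn n v); rewrite eval_Vee, eval_Imp, eval_bpow in Hn; exact Hn.
Qed.

End Semantics.

Theorem mainTheorem7 (L : language) (Gamma : form L -> Prop) (phi : form L) :
  provable L Gamma phi -> entails L Gamma phi.
Proof.
  intros [p _] B M HGamma; rewrite <- (pform_last L Gamma phi p).
  generalize (plast L Gamma phi p) as i; intro i.
  induction i as [i IH] using (well_founded_ind (plt_wf L Gamma phi p)).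
  destruct (pjust L Gamma phi p i)
    as [Hax|[Hrc|[HG|[[j [k [Hj [Hk Hjk]]]]|[[j [x [Hj ->]]]|[f [a [b [_ [_ [_ [-> Hn]]]]]]]]]]]].
  - apply valid_BLaxiom, Hax.
  - apply valid_RCaxiom, Hrc.
  - apply HGamma, HG.
  - apply (valid_mp L B M (pform L Gamma phi p j)); [rewrite <- Hjk|]; apply IH; auto.
  - apply valid_gen, IH, Hj.
  - apply valid_inf; intro n; destruct (Hn n) as [j [Hj <-]]; apply IH, Hj.
Qed.
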